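(* Consider the setting in the context, and let $\mathbf{R}=(R_1,R_2)$ and $\mathbf{R}'=(R_1',R_2')$ be two pairs of payoff matrices. Suppose the modified 4-player game is $\alpha$-strongly monotone (for some $\alpha>0$) for the payoff pair $\mathbf{R}'$ (the strong monotonicity condition does not depend on the payoffs). Let $z^*=(\pi_1^*,\pi_2^*,p_1^*,p_2^* )$ and $z^\dagger=(\pi_1^\dagger,\pi_2^\dagger,p_1^\dagger,p_2^\dagger)$ be Nash equilibria of the modified 4-player game with payoffs $\mathbf{R}$ and $\mathbf{R}'$ respectively. Then $$\|z^*-z^\dagger\|_2\le \frac{2\left(\sqrt{|\mathcal{A}_1|}+\sqrt{|\mathcal{A}_2|}\right)\|\mathbf{R}-\mathbf{R}'\|_\infty}{\alpha},$$ and consequently the corresponding RQEs $\pi^*=(\pi_1^*,\pi_2^* )$ and $\pi^\dagger=(\pi_1^\dagger,\pi_2^\dagger)$ of the original game satisfy $$\|\pi^*-\pi^\dagger\|_2\le \frac{2\left(\sqrt{|\mathcal{A}_1|}+\sqrt{|\mathcal{A}_2|}\right)\|\mathbf{R}-\mathbf{R}'\|_\infty}{\alpha}.$$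
   Context: Two players $i\in\{1,2\}$ have finite action sets $\mathcal{A}_1,\mathcal{A}_2$; $-i$ denotes the other player, $\Delta_n$ the probability simplex in $\mathbb{R}^n$. Payoff matrices $R_1\in\mathbb{R}^{|\mathcal{A}_1|\times|\mathcal{A}_2|}$, $R_2\in\mathbb{R}^{|\mathcal{A}_2|\times|\mathcal{A}_1|}$; $\|\mathbf{R}-\mathbf{R}'\|_\infty$ denotes the largest absolute value of an entry of $R_1-R_1'$ or $R_2-R_2'$. For each $i$ fix $\epsilon_i>0$, a differentiable strictly convex $\nu_i$ (on an open set containing $\Delta_{|\mathcal{A}_i|}$), and a differentiable $D_i:\Delta_{|\mathcal{A}_{-i}|}\times\Delta_{|\mathcal{A}_{-i}|}\to\mathbb{R}$ convex in its first argument. Player $i$ minimizes $f_i(\pi_i,\pi_{-i};R_i)=\sup_{p_i\in\Delta_{|\mathcal{A}_{-i}|}}[-\pi_i^TR_ip_i-D_i(p_i,\pi_{-i})]+\epsilon_i\nu_i(\pi_i)$; an RQE is a pair $(\pi_1^*,\pi_2^* )$ with $f_i(\pi_i^*,\pi_{-i}^*;R_i)\le f_i(\pi_i,\pi_{-i}^*;R_i)$ for all $\pi_i\in\Delta_{|\mathcal{A}_i|}$, $i=1,2$; for a Nash equilibrium $(\pi_1,\pi_2,p_1,p_2)$ of the modified game below, $(\pi_1,\pi_2)$ is its corresponding RQE. The modified 4-player game has joint strategy $z=(\pi_1,\pi_2,p_1,p_2)\in\mathcal{Z}=\Delta_{|\mathcal{A}_1|}\times\Delta_{|\mathcal{A}_2|}\times\Delta_{|\mathcal{A}_2|}\times\Delta_{|\mathcal{A}_1|}$;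 player $\pi_i$ minimizes $J_i(z)=-\pi_i^TR_ip_i-D_i(p_i,\pi_{-i})+\epsilon_i\nu_i(\pi_i)$ over $\pi_i\in\Delta_{|\mathcal{A}_i|}$ and adversary $p_i$ minimizes $\bar J_i(z)=\pi_i^TR_ip_i+D_i(p_i,\pi_{-i})-\epsilon_i\nu_i(\pi_i)$ over $p_i\in\Delta_{|\mathcal{A}_{-i}|}$. Its gradient operator is $F(z;\mathbf{R})=(-R_1p_1+\epsilon_1\nabla\nu_1(\pi_1),\,-R_2p_2+\epsilon_2\nabla\nu_2(\pi_2),\,R_1^T\pi_1+\nabla_{p_1}D_1(p_1,\pi_2),\,R_2^T\pi_2+\nabla_{p_2}D_2(p_2,\pi_1))$. The game is $\alpha$-strongly monotone if $(z-z')^T(F(z;\mathbf{R})-F(z';\mathbf{R}))\ge\alpha\|z-z'\|_2^2$ for all $z,z'\in\mathcal{Z}$; since the payoff terms cancel in this expression, the condition is independent of $\mathbf{R}$. *)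

From HB Require Import structures.
From mathcomp Require Import all_boot all_order all_algebra.
From mathcomp Require Import all_classical all_reals all_analysis.
Set Implicit Arguments. Unset Strict Implicit. Unset Printing Implicit Defensive.
Import Order.TTheory GRing.Theory Num.Theory.
Import numFieldNormedType.Exports.
Local Open Scope classical_set_scope.
Local Open Scope ring_scope.

Section RQE.
Variable R : realType.

Definition simplex (n : nat) : set 'cV[R]_n :=
  [set v | (forall i, 0 <= v i 0) /\ \sum_i v i 0 = 1].

Definition dotv (n : nat) (u v : 'cV[R]_n) : R := \sum_i u i 0 * v i 0.
Definition sqnorm (n : nat) (v : 'cV[R]_n) : R := dotv v v.

Definition grad (n : nat) (f : 'cV[R]_n -> R) (x : 'cV[R]_n) : 'cV[R]_n :=
  \col_j ('d f x (delta_mx j 0)).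

Definition grad1 (m : nat) (D : 'cV[R]_m -> 'cV[R]_m -> R) (p q : 'cV[R]_m)
  : 'cV[R]_m := grad (fun p' => D p' q) p.

Definition convex_on (n : nat) (A : set 'cV[R]_n) (f : 'cV[R]_n -> R) :=
  forall x y t, A x -> A y -> 0 <= t <= 1 ->
    f (t *: x + (1 - t) *: y) <= t * f x + (1 - t) * f y.
Definition strictly_convex_on (n : nat) (A : set 'cV[R]_n) (f : 'cV[R]_n -> R) :=
  forall x y t, A x -> A y -> x != y -> 0 < t < 1 ->
    f (t *: x + (1 - t) *: y) < t * f x + (1 - t) * f y.

Variables (n1 n2 : nat).

Definition jstrat := ('cV[R]_n1 * 'cV[R]_n2 * 'cV[R]_n2 * 'cV[R]_n1)%type.
Definition pi1 (z : jstrat) : 'cV[R]_n1 := z.1.1.1.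
Definition pi2 (z : jstrat) : 'cV[R]_n2 := z.1.1.2.
Definition pp1 (z : jstrat) : 'cV[R]_n2 := z.1.2.
Definition pp2 (z : jstrat) : 'cV[R]_n1 := z.2.

Definition Zset : set jstrat :=
  [set z | simplex (pi1 z) /\ simplex (pi2 z) /\ simplex (pp1 z) /\ simplex (pp2 z)].

Definition bil (a b : nat) (x : 'cV[R]_a) (M : 'M[R]_(a, b)) (y : 'cV[R]_b) : R :=
  (x^T *m M *m y) 0 0.

Variables (eps1 eps2 : R)
          (nu1 : 'cV[R]_n1 -> R) (nu2 : 'cV[R]_n2 -> R)
          (D1 : 'cV[R]_n2 -> 'cV[R]_n2 -> R) (D2 : 'cV[R]_n1 -> 'cV[R]_n1 -> R).

Definition J1 (R1 : 'M[R]_(n1, n2)) (z : jstrat) : R :=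
  - bil (pi1 z) R1 (pp1 z) - D1 (pp1 z) (pi2 z) + eps1 * nu1 (pi1 z).
Definition J2 (R2 : 'M[R]_(n2, n1)) (z : jstrat) : R :=
  - bil (pi2 z) R2 (pp2 z) - D2 (pp2 z) (pi1 z) + eps2 * nu2 (pi2 z).
Definition Jbar1 (R1 : 'M[R]_(n1, n2)) (z : jstrat) : R :=
  bil (pi1 z) R1 (pp1 z) + D1 (pp1 z) (pi2 z) - eps1 * nu1 (pi1 z).
Definition Jbar2 (R2 : 'M[R]_(n2, n1)) (z : jstrat) : R :=
  bil (pi2 z) R2 (pp2 z) + D2 (pp2 z) (pi1 z) - eps2 * nu2 (pi2 z).

Definition is_NE (R1 : 'M[R]_(n1, n2)) (R2 : 'M[R]_(n2, n1)) (z : jstrat) : Prop :=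
  Zset z /\
  (forall x, simplex x -> J1 R1 z <= J1 R1 (x, pi2 z, pp1 z, pp2 z)) /\
  (forall x, simplex x -> J2 R2 z <= J2 R2 (pi1 z, x, pp1 z, pp2 z)) /\
  (forall x, simplex x -> Jbar1 R1 z <= Jbar1 R1 (pi1 z, pi2 z, x, pp2 z)) /\
  (forall x, simplex x -> Jbar2 R2 z <= Jbar2 R2 (pi1 z, pi2 z, pp1 z, x)).

Definition Fop (R1 : 'M[R]_(n1, n2)) (R2 : 'M[R]_(n2, n1)) (z : jstrat) : jstrat :=
  (- (R1 *m pp1 z) + eps1 *: grad nu1 (pi1 z),
   - (R2 *m pp2 z) + eps2 *: grad nu2 (pi2 z),
   R1^T *m pi1 z + grad1 D1 (pp1 z) (pi2 z),
   R2^T *m pi2 z + grad1 D2 (pp2 z) (pi1 z)).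

Definition jdot (z w : jstrat) : R :=
  dotv (pi1 z) (pi1 w) + dotv (pi2 z) (pi2 w) + dotv (pp1 z) (pp1 w)
  + dotv (pp2 z) (pp2 w).
Definition jsub (z w : jstrat) : jstrat :=
  (pi1 z - pi1 w, pi2 z - pi2 w, pp1 z - pp1 w, pp2 z - pp2 w).
Definition jnorm (z : jstrat) : R := Num.sqrt (jdot z z).

Definition strongly_monotone (alpha : R)
    (R1 : 'M[R]_(n1, n2)) (R2 : 'M[R]_(n2, n1)) : Prop :=
  forall z z', Zset z -> Zset z' ->
    jdot (jsub z z') (jsub (Fop R1 R2 z) (Fop R1 R2 z')) >= alpha * jdot (jsub z z') (jsub z z').

End RQE.

Definition mx_supnorm (R : realType) (a b : nat) (M : 'M[R]_(a, b)) : R :=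
  \big[Num.max/0]_(i < a) \big[Num.max/0]_(j < b) `|M i j|.

Definition pair_dist_inf (R : realType) (n1 n2 : nat)
    (R1 R1' : 'M[R]_(n1, n2)) (R2 R2' : 'M[R]_(n2, n1)) : R :=
  Num.max (mx_supnorm (R1 - R1')) (mx_supnorm (R2 - R2')).

Definition pi_dist (R : realType) (n1 n2 : nat) (z w : jstrat R n1 n2) : R :=
  Num.sqrt (sqnorm (pi1 z - pi1 w) + sqnorm (pi2 z - pi2 w)).

(* At a minimiser over a simplex the directional derivative towards any other point
   of the simplex is nonnegative, so every Nash equilibrium z of the modified game
   solves the variational inequality <w - z, F(z)> >= 0 for all w in Z.  Adding
   these inequalities at z* (payoffs R) and z' (payoffs R') to the strong
   monotonicity of F(.; R') gives alpha |z* - z'|^2 <= <z* - z', F(z*; R') - F(z*; R)>,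
   and Young's inequality turns this into alpha |z* - z'| <= |F(z*; R') - F(z*; R)|.
   Only the bilinear payoff terms of F depend on the payoffs: each block of the
   difference is a matrix with entries bounded by ||R - R'||_inf applied to a
   probability vector, so |F(z*; R') - F(z*; R)|^2 <= 2 (|A1| + |A2|) ||R - R'||_inf^2,
   which is at most (2 (sqrt |A1| + sqrt |A2|) ||R - R'||_inf)^2. *)

From HB Require Import structures.
From mathcomp Require Import all_boot all_order all_algebra.
From mathcomp Require Import all_classical all_reals all_analysis.
From mathcomp Require Import ring lra.
Set Implicit Arguments. Unset Strict Implicit. Unset Printing Implicit Defensive.
Import Order.TTheory GRing.Theory Num.Theory.
Import numFieldNormedType.Exports.
Local Open Scope classical_set_scope.
Local Open Scope ring_scope.

Section Differential.
Variables (R : realType) (U V W : normedModType R).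

Lemma differentiable_partial1 (f : U * V -> W) p q :
  differentiable f (p, q) -> differentiable (fun p' => f (p', q)) p.
Proof.
move=> df; have dpair : differentiable (fun p' => (p', q)) p.
  exact: differentiable_pair.
exact: differentiable_comp dpair df.
Qed.

Lemma le_diff_increment (h : U -> R) (x v : U) (c : R) :
  differentiable h x ->
  (forall t, 0 < t < 1 -> c * t <= h (x + t *: v) - h x) -> c <= 'd h x v.
Proof.
move=> dh hinc; rewrite -deriveE //.
have := cvg_dnbhs_at_right (diff_derivable (v:=v) dh).
move=> /cvgr_to_ge; apply; near=> t.
have t0 : 0 < t by near: t; exact: nbhs_right_gt.
have t1 : t < 1 by near: t; exact: nbhs_right_lt.
rewrite /= (addrC _ x) ler_pdivlMl // mulrC.
by apply: hinc; rewrite t0 t1.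
Unshelve. all: by end_near.
Qed.

End Differential.

Section Dotv.
Variable R : realType.

Lemma dotvDl n (u u' w : 'cV[R]_n) : dotv (u + u') w = dotv u w + dotv u' w.
Proof. by rewrite /dotv -big_split; apply: eq_bigr => i _; rewrite mxE mulrDl. Qed.

Lemma dotvDr n (u w w' : 'cV[R]_n) : dotv u (w + w') = dotv u w + dotv u w'.
Proof. by rewrite /dotv -big_split; apply: eq_bigr => i _; rewrite mxE mulrDr. Qed.

Lemma dotvNl n (u w : 'cV[R]_n) : dotv (- u) w = - dotv u w.
Proof. by rewrite /dotv -sumrN; apply: eq_bigr => i _; rewrite mxE mulNr. Qed.

Lemma dotvNr n (u w : 'cV[R]_n) : dotv u (- w) = - dotv u w.
Proof. by rewrite /dotv -sumrN; apply: eq_bigr => i _; rewrite mxE mulrN. Qed.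

Lemma dotvBl n (u u' w : 'cV[R]_n) : dotv (u - u') w = dotv u w - dotv u' w.
Proof. by rewrite dotvDl dotvNl. Qed.

Lemma dotvBr n (u w w' : 'cV[R]_n) : dotv u (w - w') = dotv u w - dotv u w'.
Proof. by rewrite dotvDr dotvNr. Qed.

Lemma dotvZl n a (u w : 'cV[R]_n) : dotv (a *: u) w = a * dotv u w.
Proof. by rewrite /dotv mulr_sumr; apply: eq_bigr => i _; rewrite mxE mulrA. Qed.

Lemma dotvZr n a (u w : 'cV[R]_n) : dotv u (a *: w) = a * dotv u w.
Proof. by rewrite /dotv mulr_sumr; apply: eq_bigr => i _; rewrite mxE mulrCA. Qed.

Lemma sqnorm_ge0 n (u : 'cV[R]_n) : 0 <= sqnorm u.
Proof. by apply: sumr_ge0 => i _; exact: sqr_ge0. Qed.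

Lemma dotv_young n a (u w : 'cV[R]_n) :
  2 * a * dotv u w <= a ^+ 2 * sqnorm u + sqnorm w.
Proof.
rewrite /sqnorm /dotv !mulr_sumr -big_split /=; apply: ler_sum => i _.
by have := sqr_ge0 (a * u i 0 - w i 0); nra.
Qed.

Lemma bil_dotv a b (x : 'cV[R]_a) (M : 'M[R]_(a, b)) y : bil x M y = dotv x (M *m y).
Proof. by rewrite /bil -mulmxA mxE /dotv; apply: eq_bigr => i _; rewrite mxE. Qed.

Lemma bil_dotv_tr a b (x : 'cV[R]_a) (M : 'M[R]_(a, b)) y :
  bil x M y = dotv y (M^T *m x).
Proof.
rewrite /bil /dotv mxE; apply: eq_bigr => j _; rewrite mulrC; congr (_ * _).
by rewrite !mxE; apply: eq_bigr => i _; rewrite !mxE mulrC.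
Qed.

Lemma diff_dotv_grad n (h : 'cV[R]_n -> R) x v : 'd h x v = dotv v (grad h x).
Proof.
rewrite /dotv /grad {1}(matrix_sum_delta v) linear_sum; apply: eq_bigr => i _.
by rewrite big_ord1 linearZ mxE.
Qed.

End Dotv.

Section SimplexOptimality.
Variable R : realType.

Lemma simplex_segment n (x y : 'cV[R]_n) t :
  simplex x -> simplex y -> 0 <= t <= 1 -> simplex (x + t *: (y - x)).
Proof.
move=> [x0 x1] [y0 y1] /andP[t0 t1]; split.
  by move=> i; rewrite !mxE; have := x0 i; have := y0 i; nra.
rewrite (eq_bigr (fun i => x i 0 + t * (y i 0 - x i 0))); last by move=> i _; rewrite !mxE.
by rewrite big_split /= -mulr_sumr sumrB x1 y1 subrr mulr0 addr0.
Qed.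

Lemma simplex_min_first_order n (f h : 'cV[R]_n -> R) (w x y : 'cV[R]_n) (k : R) :
  0 < k -> differentiable h x -> simplex x -> simplex y ->
  (forall x', simplex x' -> f x <= f x') ->
  (forall x', f x' - f x = dotv (x' - x) w + k * (h x' - h x)) ->
  0 <= dotv (y - x) (w + k *: grad h x).
Proof.
move=> k0 dh sx sy fmin fE.
rewrite dotvDr dotvZr -diff_dotv_grad.
set a := dotv (y - x) w.
have : - (a / k) <= 'd h x (y - x).
  apply: le_diff_increment => // t /andP[t0 t1].
  have t01 : 0 <= t <= 1 by rewrite !ltW.
  have := fmin _ (simplex_segment sx sy t01).
  rewrite -subr_ge0 fE (addrC x) addrK dotvZl -/a.
  rewrite mulNr mulrAC lerNl ler_pdivlMr //.
  by lra.
rewrite -(ler_pM2l k0) mulrN mulrCA divff ?gt_eqF // mulr1.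
by lra.
Qed.

End SimplexOptimality.

Section JointInnerProduct.
Variables (R : realType) (n1 n2 : nat).
Implicit Types (u w z : jstrat R n1 n2).

Lemma jdot_subl u w z : jdot (jsub u w) z = jdot u z - jdot w z.
Proof. by rewrite /jdot /jsub /pi1 /pi2 /pp1 /pp2 /= !dotvBl; ring. Qed.

Lemma jdot_subr u w z : jdot z (jsub u w) = jdot z u - jdot z w.
Proof. by rewrite /jdot /jsub /pi1 /pi2 /pp1 /pp2 /= !dotvBr; ring. Qed.

Lemma jdot_young a u w : 2 * a * jdot u w <= a ^+ 2 * jdot u u + jdot w w.
Proof.
have := dotv_young a (pi1 u) (pi1 w); have := dotv_young a (pi2 u) (pi2 w).
have := dotv_young a (pp1 u) (pp1 w); have := dotv_young a (pp2 u) (pp2 w).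
by rewrite /jdot /sqnorm; nra.
Qed.

Lemma jnorm_le u b : 0 <= b -> jdot u u <= b ^+ 2 -> jnorm u <= b.
Proof. by move=> b0 ub; rewrite -(ger0_norm b0) -sqrtr_sqr ler_wsqrtr. Qed.

Lemma pi_dist_le_jnorm u w : pi_dist u w <= jnorm (jsub u w).
Proof.
rewrite /pi_dist /jnorm /jdot /jsub /pi1 /pi2 /pp1 /pp2 /= ler_wsqrtr //.
have := sqnorm_ge0 (u.1.2 - w.1.2); have := sqnorm_ge0 (u.2 - w.2).
by rewrite /sqnorm; lra.
Qed.

Lemma monotone_VI_stability alpha (zs zd Fs Fd Gs : jstrat R n1 n2) :
  0 < alpha ->
  alpha * jdot (jsub zs zd) (jsub zs zd) <= jdot (jsub zs zd) (jsub Fs Fd) ->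
  0 <= jdot (jsub zs zd) Fd -> 0 <= jdot (jsub zd zs) Gs ->
  alpha ^+ 2 * jdot (jsub zs zd) (jsub zs zd) <= jdot (jsub Fs Gs) (jsub Fs Gs).
Proof.
move=> alpha_gt0 mono vid vis.
have key : alpha * jdot (jsub zs zd) (jsub zs zd) <= jdot (jsub zs zd) (jsub Fs Gs).
  move: mono vis; rewrite !(jdot_subr Fs) (jdot_subl zd zs) (jdot_subl zs zd Gs).
  by lra.
have := jdot_young alpha (jsub zs zd) (jsub Fs Gs).
move: (jdot (jsub zs zd) (jsub zs zd)) (jdot (jsub zs zd) (jsub Fs Gs)) key => N X key.
have : 0 <= alpha * (X - alpha * N) by apply: mulr_ge0; [exact: ltW | rewrite subr_ge0].
by lra.
Qed.

End JointInnerProduct.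

Lemma sum_le_sqr_sum_sqrt (R : rcfType) (a b : R) : 0 <= a -> 0 <= b ->
  2 * (a + b) <= (2 * (Num.sqrt a + Num.sqrt b)) ^+ 2.
Proof.
move=> a0 b0; rewrite -{1}(sqr_sqrtr a0) -{1}(sqr_sqrtr b0).
by have := sqrtr_ge0 a; have := sqrtr_ge0 b; nra.
Qed.

Section PayoffPerturbation.
Variable R : realType.

Lemma mx_supnorm_ge a b (M : 'M[R]_(a, b)) i j : `|M i j| <= mx_supnorm M.
Proof. exact: le_trans (le_bigmax _ _ j) (le_bigmax _ _ i). Qed.

Lemma mx_supnorm_ge0 a b (M : 'M[R]_(a, b)) : 0 <= mx_supnorm M.
Proof. exact: bigmax_ge_id. Qed.

Lemma pair_dist_inf_ge0 n1 n2 (R1 R1' : 'M[R]_(n1, n2)) R2 R2' :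
  0 <= pair_dist_inf R1 R1' R2 R2'.
Proof. by rewrite le_max mx_supnorm_ge0. Qed.

Lemma sqnorm_mulmx_simplex a b (M : 'M[R]_(a, b)) p δ : simplex p ->
  (forall i j, `|M i j| <= δ) -> sqnorm (M *m p) <= a%:R * δ ^+ 2.
Proof.
move=> [p0 p1] hM.
have entry i : `|(M *m p) i 0| <= δ.
  rewrite mxE; apply: le_trans (ler_norm_sum _ _ _) _.
  rewrite -[δ]mulr1 -p1 mulr_sumr; apply: ler_sum => j _.
  by rewrite normrM (ger0_norm (p0 j)) ler_wpM2r.
rewrite /sqnorm /dotv -[in X in X%:R](card_ord a) mulr_natl -sumr_const.
apply: ler_sum => i _.
by rewrite -expr2 -real_normK ?num_real // lerXn2r ?nnegrE // (le_trans _ (entry i)).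
Qed.

End PayoffPerturbation.

Section ModifiedGame.
Variables (R : realType) (n1 n2 : nat) (eps1 eps2 : R)
  (nu1 : 'cV[R]_n1 -> R) (nu2 : 'cV[R]_n2 -> R)
  (D1 : 'cV[R]_n2 -> 'cV[R]_n2 -> R) (D2 : 'cV[R]_n1 -> 'cV[R]_n1 -> R).

Let F := Fop eps1 eps2 nu1 nu2 D1 D2.

Lemma jsub_Fop R1 R1' R2 R2' (z : jstrat R n1 n2) :
  jsub (F R1' R2' z) (F R1 R2 z) =
  ((R1 - R1') *m pp1 z, (R2 - R2') *m pp2 z,
   (R1' - R1)^T *m pi1 z, (R2' - R2)^T *m pi2 z).
Proof.
rewrite /F /Fop /jsub /pi1 /pi2 /pp1 /pp2 /= !linearB /= !mulmxBl.
by congr (_, _, _, _); rewrite opprD addrACA subrr addr0 // opprK addrC.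
Qed.

Lemma Fop_payoff_sensitivity R1 R1' R2 R2' z : Zset z ->
  jdot (jsub (F R1' R2' z) (F R1 R2 z)) (jsub (F R1' R2' z) (F R1 R2 z))
  <= 2 * (n1%:R + n2%:R) * pair_dist_inf R1 R1' R2 R2' ^+ 2.
Proof.
move=> [s1 [s2 [s3 s4]]]; rewrite jsub_Fop.
set δ := pair_dist_inf _ _ _ _.
have b1 i j : `|(R1 - R1') i j| <= δ.
  by apply: le_trans (mx_supnorm_ge _ i j) _; rewrite le_max lexx.
have b2 i j : `|(R2 - R2') i j| <= δ.
  by apply: le_trans (mx_supnorm_ge _ i j) _; rewrite le_max lexx orbT.
have b1t i j : `|(R1' - R1)^T i j| <= δ by move: (b1 j i); rewrite !mxE distrC.
have b2t i j : `|(R2' - R2)^T i j| <= δ by move: (b2 j i); rewrite !mxE distrC.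
have := sqnorm_mulmx_simplex s3 b1; have := sqnorm_mulmx_simplex s4 b2.
have := sqnorm_mulmx_simplex s1 b1t; have := sqnorm_mulmx_simplex s2 b2t.
by rewrite /jdot /sqnorm /pi1 /pi2 /pp1 /pp2 /=; lra.
Qed.

Hypotheses (eps1_gt0 : 0 < eps1) (eps2_gt0 : 0 < eps2)
  (nu1_diff : forall x, simplex x -> differentiable nu1 x)
  (nu2_diff : forall x, simplex x -> differentiable nu2 x)
  (D1_diff : forall p q, simplex p -> simplex q -> differentiable (D1^~ q) p)
  (D2_diff : forall p q, simplex p -> simplex q -> differentiable (D2^~ q) p).

Lemma NE_variational_inequality R1 R2 z w :
  is_NE eps1 eps2 nu1 nu2 D1 D2 R1 R2 z -> Zset w ->
  0 <= jdot (jsub w z) (F R1 R2 z).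
Proof.
case: z => [[[a b] c] d] [[sa [sb [sc sd]]] [h1 [h2 [h3 h4]]]] [w1 [w2 [w3 w4]]].
rewrite /pi1 /pi2 /pp1 /pp2 /= in sa sb sc sd h1 h2 h3 h4.
have vi1 : 0 <= dotv (pi1 w - a) (- (R1 *m c) + eps1 *: grad nu1 a).
  apply: (simplex_min_first_order (f := fun x => J1 eps1 nu1 D1 R1 (x, b, c, d)))
    eps1_gt0 (nu1_diff sa) sa w1 h1 _ => x.
  by rewrite /J1 /pi1 /pi2 /pp1 /pp2 /= !bil_dotv dotvNr dotvBl; ring.
have vi2 : 0 <= dotv (pi2 w - b) (- (R2 *m d) + eps2 *: grad nu2 b).
  apply: (simplex_min_first_order (f := fun x => J2 eps2 nu2 D2 R2 (a, x, c, d)))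
    eps2_gt0 (nu2_diff sb) sb w2 h2 _ => x.
  by rewrite /J2 /pi1 /pi2 /pp1 /pp2 /= !bil_dotv dotvNr dotvBl; ring.
have vi3 : 0 <= dotv (pp1 w - c) (R1^T *m a + grad1 D1 c b).
  rewrite -[grad1 _ _ _]scale1r.
  apply: (simplex_min_first_order (f := fun x => Jbar1 eps1 nu1 D1 R1 (a, b, x, d)))
    ltr01 (D1_diff sc sb) sc w3 h3 _ => x.
  by rewrite /Jbar1 /pi1 /pi2 /pp1 /pp2 /= !bil_dotv_tr dotvBl; ring.
have vi4 : 0 <= dotv (pp2 w - d) (R2^T *m b + grad1 D2 d a).
  rewrite -[grad1 _ _ _]scale1r.
  apply: (simplex_min_first_order (f := fun x => Jbar2 eps2 nu2 D2 R2 (a, b, c, x)))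
    ltr01 (D2_diff sd sa) sd w4 h4 _ => x.
  by rewrite /Jbar2 /pi1 /pi2 /pp1 /pp2 /= !bil_dotv_tr dotvBl; ring.
by rewrite !addr_ge0.
Qed.

Lemma NE_payoff_stability R1 R1' R2 R2' alpha zs zd :
  0 < alpha -> strongly_monotone eps1 eps2 nu1 nu2 D1 D2 alpha R1' R2' ->
  is_NE eps1 eps2 nu1 nu2 D1 D2 R1 R2 zs ->
  is_NE eps1 eps2 nu1 nu2 D1 D2 R1' R2' zd ->
  alpha ^+ 2 * jdot (jsub zs zd) (jsub zs zd)
  <= jdot (jsub (F R1' R2' zs) (F R1 R2 zs)) (jsub (F R1' R2' zs) (F R1 R2 zs)).
Proof.
move=> alpha_gt0 mono NEs NEd.
apply: (monotone_VI_stability alpha_gt0 (mono _ _ NEs.1 NEd.1)).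
- exact: NE_variational_inequality NEd NEs.1.
- exact: NE_variational_inequality NEs NEd.1.
Qed.

End ModifiedGame.

Theorem theorem1 (R : realType) (n1 n2 : nat)
  (eps1 eps2 : R) (nu1 : 'cV[R]_n1 -> R) (nu2 : 'cV[R]_n2 -> R)
  (D1 : 'cV[R]_n2 -> 'cV[R]_n2 -> R) (D2 : 'cV[R]_n1 -> 'cV[R]_n1 -> R)
  (heps1 : 0 < eps1) (heps2 : 0 < eps2)
  (hnu1 : exists U : set 'cV[R]_n1, open U /\ simplex (n:=n1) `<=` U /\
            (forall x, U x -> differentiable nu1 x))
  (hnu2 : exists U : set 'cV[R]_n2, open U /\ simplex (n:=n2) `<=` U /\
            (forall x, U x -> differentiable nu2 x))
  (hnu1c : strictly_convex_on (simplex (n:=n1)) nu1)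
  (hnu2c : strictly_convex_on (simplex (n:=n2)) nu2)
  (hD1 : exists U : set ('cV[R]_n2 * 'cV[R]_n2),
            open U /\ (forall p q, simplex p -> simplex q -> U (p, q)) /\
            (forall pq, U pq -> differentiable (fun w => D1 w.1 w.2) pq))
  (hD2 : exists U : set ('cV[R]_n1 * 'cV[R]_n1),
            open U /\ (forall p q, simplex p -> simplex q -> U (p, q)) /\
            (forall pq, U pq -> differentiable (fun w => D2 w.1 w.2) pq))
  (hD1c : forall q, simplex q -> convex_on (simplex (n:=n2)) (fun p => D1 p q))
  (hD2c : forall q, simplex q -> convex_on (simplex (n:=n1)) (fun p => D2 p q))
  (R1 R1' : 'M[R]_(n1, n2)) (R2 R2' : 'M[R]_(n2, n1)) (alpha : R)
  (halpha : 0 < alpha)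
  (hmon : strongly_monotone eps1 eps2 nu1 nu2 D1 D2 alpha R1' R2')
  (zs zd : jstrat R n1 n2)
  (hzs : is_NE eps1 eps2 nu1 nu2 D1 D2 R1 R2 zs)
  (hzd : is_NE eps1 eps2 nu1 nu2 D1 D2 R1' R2' zd) :
  let bound := 2 * (Num.sqrt (n1%:R) + Num.sqrt (n2%:R))
               * pair_dist_inf R1 R1' R2 R2' / alpha in
  jnorm (jsub zs zd) <= bound /\ pi_dist zs zd <= bound.
Proof.
move=> bound.
have nu1_diff x : simplex x -> differentiable nu1 x.
  by case: hnu1 => U [_ [sU dU]] /sU/dU.
have nu2_diff x : simplex x -> differentiable nu2 x.
  by case: hnu2 => U [_ [sU dU]] /sU/dU.
have D1_diff p q : simplex p -> simplex q -> differentiable (D1^~ q) p.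
  case: hD1 => U [_ [sU dU]] sp sq.
  exact: (differentiable_partial1 (f := fun w => D1 w.1 w.2) (dU _ (sU _ _ sp sq))).
have D2_diff p q : simplex p -> simplex q -> differentiable (D2^~ q) p.
  case: hD2 => U [_ [sU dU]] sp sq.
  exact: (differentiable_partial1 (f := fun w => D2 w.1 w.2) (dU _ (sU _ _ sp sq))).
have bound_ge0 : 0 <= bound.
  apply: divr_ge0 (ltW halpha); apply: mulr_ge0 (pair_dist_inf_ge0 _ _ _ _).
  by rewrite mulr_ge0 ?addr_ge0 ?sqrtr_ge0.
have dist_sq : jdot (jsub zs zd) (jsub zs zd) <= bound ^+ 2.
  rewrite -(ler_pM2l (exprn_gt0 2 halpha)) -exprMn.
  apply: le_trans (NE_payoff_stability heps1 heps2 nu1_diff nu2_diff D1_diff D2_diff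
                     halpha hmon hzs hzd) _.
  apply: le_trans (Fop_payoff_sensitivity eps1 eps2 nu1 nu2 D1 D2 R1 R1' R2 R2' hzs.1) _.
  rewrite /bound [alpha * _]mulrC divfK ?gt_eqF // exprMn.
  by rewrite ler_wpM2r ?sqr_ge0 // sum_le_sqr_sum_sqrt.
have dist : jnorm (jsub zs zd) <= bound := jnorm_le bound_ge0 dist_sq.
by split=> //; exact: le_trans (pi_dist_le_jnorm zs zd) dist.
Qed.
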